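(* Let $\mu$ be a pure-state ensemble on $\mathbb{C}^d$ (a probability measure on unit vectors $|\psi\rangle\in\mathbb{C}^d$). For each information value $I$ that is achieved by some measurement procedure, let $D(I)$ be the infimum of the average disturbance $\overline{D}$ over all measurement procedures whose information gain about $\mu$ equals $I$. Then the information-disturbance frontier $I\mapsto D(I)$ is convex (defined on a convex set of achievable information values, with $\lambda D(I_1)+(1-\lambda)D(I_2)\ge D(\lambda I_1+(1-\lambda)I_2)$ for $\lambda\in[0,1]$).
   Context: A measurement procedure on $\mathbb{C}^d$ consists of a finite POVM $\{F_b\}$ (positive semidefinite operators with $\sum_b F_b=I$) together with operators $A_{bi}$ (finitely many for each $b$) satisfying $\sum_i A_{bi}^\dagger A_{bi}=F_b$; outcome $b$ transforms $\rho$ into the unnormalized state $\mathcal{A}_b(\rho)=\sum_i A_{bi}\rho A_{bi}^\dagger$. Given a pure-state ensemble $\mu$: outcome probabilities are $p(b|\psi)=\langle\psi|F_b|\psi\rangle$ and $p(b)=\int d\mu(\psi)\,p(b|\psi)$; the information gain is the mutual information $H(B:\Psi)=H(B)-H(B|\Psi)$ with $H(B)=-\sum_b p(b)\log p(b)$ and $H(B|\Psi)=-\int d\mu(\psi)\sum_b p(b|\psi)\log p(b|\psi)$. The average disturbance is $\overline{D}=1-\int d\mu(\psi)\sum_{b,i}|\langle\psi|A_{bi}|\psi\rangle|^2$. *)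

From HB Require Import structures.
From mathcomp Require Import all_boot all_algebra.
From mathcomp Require Import complex.
From mathcomp Require Import all_classical all_reals all_analysis.
Set Implicit Arguments. Unset Strict Implicit. Unset Printing Implicit Defensive.
Import GRing.Theory Num.Theory.
Local Open Scope ring_scope.
Local Open Scope classical_set_scope.

Section QDefs.
Variables (R : realType) (d : nat).

Definition adjmx m n (A : 'M[R[i]]_(m, n)) : 'M[R[i]]_(n, m) :=
  (map_mx (@conjc R) A)^T.

Definition qexp (psi : 'cV[R[i]]_d) (M : 'M[R[i]]_d) : R[i] :=
  (adjmx psi *m M *m psi) 0 0.

Definition sqmod (z : R[i]) : R := complex.Re z ^+ 2 + complex.Im z ^+ 2.

(** x log x (natural log; 0 log 0 = 0 since 0 * _ = 0). *)
Definition xlogx (x : R) : R := x * ln x.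

Record mproc := MProc {
  mp_m : nat;
  mp_k : 'I_mp_m -> nat;
  mp_A : forall b : 'I_mp_m, 'I_(mp_k b) -> 'M[R[i]]_d
}.

Definition povm (M : mproc) (b : 'I_(mp_m M)) : 'M[R[i]]_d :=
  \sum_(i < mp_k b) (adjmx (mp_A i) *m mp_A i).

Definition valid_mproc (M : mproc) : Prop :=
  \sum_(b < mp_m M) povm b = 1%:M.

Definition pcond (M : mproc) (psi : 'cV[R[i]]_d) (b : 'I_(mp_m M)) : R :=
  complex.Re (qexp psi (povm b)).

Variables (dT : measure_display) (T : measurableType dT)
          (P : probability T R) (psi : T -> 'cV[R[i]]_d).
(* The ensemble mu is the law of psi under P. *)

Definition pout (M : mproc) (b : 'I_(mp_m M)) : R :=
  Rintegral P setT (fun t => pcond (psi t) b).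

Definition H_B (M : mproc) : R := - \sum_(b < mp_m M) xlogx (pout b).

Definition H_B_Psi (M : mproc) : R :=
  - Rintegral P setT (fun t => \sum_(b < mp_m M) xlogx (pcond (psi t) b)).

Definition info_gain (M : mproc) : R := H_B M - H_B_Psi M.

Definition avg_disturbance (M : mproc) : R :=
  1 - Rintegral P setT
        (fun t => \sum_(b < mp_m M) \sum_(i < mp_k b) sqmod (qexp (psi t) (mp_A i))).

Definition achievable (I : R) : Prop :=
  exists M : mproc, valid_mproc M /\ info_gain M = I.

Definition frontier (I : R) : R :=
  inf [set avg_disturbance M | M in [set M : mproc | valid_mproc M /\ info_gain M = I]].

End QDefs.

From HB Require Import structures.
From mathcomp Require Import all_boot all_algebra.
From mathcomp Require Import complex.
From mathcomp Require Import all_classical all_reals all_analysis.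
From mathcomp Require Import ring order measurable_realfun.
Set Implicit Arguments.
Unset Strict Implicit.
Unset Printing Implicit Defensive.

Import Order.TTheory GRing.Theory Num.Theory.
Local Open Scope ring_scope.
Local Open Scope classical_set_scope.

(* Given procedures M1, M2 and 0 <= lam <= 1, run M1 with probability lam and
   M2 with probability 1 - lam and record which one ran: its Kraus operators are
   sqrt(lam) A_bi and sqrt(1 - lam) A'_bi, indexed by the disjoint union of the
   outcomes.  Both H(B) and H(B|Psi) of this mixture pick up the same binary
   entropy h(lam) on top of the lam-weighted entropies, so the information gain is
   exactly lam I1 + (1 - lam) I2, and the disturbance is likewise affine in lam.
   Hence achievable values form a convex set, and every convex combination of
   disturbances at I1 and I2 is a disturbance at the mixed value; taking infima
   (over nonempty sets bounded below by 0, since by Cauchy-Schwarz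
   |<psi|A|psi>|^2 <= <psi|A^dagger A|psi>) gives convexity of the frontier. *)

Section Adjoint.
Variable R : realType.
Local Notation C := R[i].

Lemma adjmxD m n (A B : 'M[C]_(m, n)) : adjmx (A + B) = adjmx A + adjmx B.
Proof. by apply/matrixP => i j; rewrite !mxE rmorphD. Qed.

Lemma adjmxN m n (A : 'M[C]_(m, n)) : adjmx (- A) = - adjmx A.
Proof. by apply/matrixP => i j; rewrite !mxE rmorphN. Qed.

Lemma adjmxZ m n c (A : 'M[C]_(m, n)) : adjmx (c *: A) = conjc c *: adjmx A.
Proof. by apply/matrixP => i j; rewrite !mxE rmorphM. Qed.

Lemma adjmxM m n p (A : 'M[C]_(m, n)) (B : 'M[C]_(n, p)) :
  adjmx (A *m B) = adjmx B *m adjmx A.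
Proof. by rewrite /adjmx map_mxM trmx_mul. Qed.

Lemma adjmxK m n (A : 'M[C]_(m, n)) : adjmx (adjmx A) = A.
Proof. by apply/matrixP => i j; rewrite !mxE conjcK. Qed.

Lemma adjmx_mul_ge0 n (u : 'cV[C]_n) : 0 <= (adjmx u *m u) 0 0.
Proof.
rewrite mxE; apply: sumr_ge0 => j _; rewrite !mxE mulrC.
exact: mulcJ_ge0.
Qed.

End Adjoint.

Section ComplexParts.
Variable R : realType.
Local Notation C := R[i].

Lemma Re_sum I (r : seq I) (P : pred I) (F : I -> C) :
  complex.Re (\sum_(i <- r | P i) F i) = \sum_(i <- r | P i) complex.Re (F i).
Proof. exact: (raddf_sum (@complex.Re R : {additive Rcomplex R -> R})). Qed.

Lemma ler_Re (x y : C) : x <= y -> complex.Re x <= complex.Re y.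
Proof. by rewrite lecE => /andP[]. Qed.

Lemma Re_ge0 (x : C) : 0 <= x -> 0 <= complex.Re x.
Proof. exact: ler_Re. Qed.

Lemma Re_realM (a : R) (z : C) : complex.Re (real_complex R a * z) = a * complex.Re z.
Proof. by case: z => u v /=; ring. Qed.

Lemma sqmod_ge0 (z : C) : 0 <= sqmod z.
Proof. by rewrite addr_ge0 ?sqr_ge0. Qed.

Lemma sqmod_realM (a : R) (z : C) : sqmod (real_complex R a * z) = a ^+ 2 * sqmod z.
Proof. by case: z => u v; rewrite /sqmod /=; ring. Qed.

Lemma sqmodE (z : C) : sqmod z = complex.Re (`|z| ^+ 2).
Proof. by rewrite -add_Re2_Im2. Qed.

Lemma conjc_sqrtM (a : R) : 0 <= a ->
  conjc (real_complex R (Num.sqrt a)) * real_complex R (Num.sqrt a) = real_complex R a.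
Proof. by move=> a0; rewrite conjc_real -rmorphM -expr2 sqr_sqrtr. Qed.

Lemma adjmx_mul_scale_sqrt m n (a : R) (X : 'M[C]_(m, n)) : 0 <= a ->
  adjmx (real_complex R (Num.sqrt a) *: X) *m (real_complex R (Num.sqrt a) *: X) =
  real_complex R a *: (adjmx X *m X).
Proof. by move=> a0; rewrite adjmxZ -scalemxAl -scalemxAr scalerA conjc_sqrtM. Qed.

End ComplexParts.

Section QuadraticForm.
Variables (R : realType) (d : nat).
Local Notation C := R[i].
Implicit Types (psi : 'cV[C]_d) (A B : 'M[C]_d).

Lemma qexpD psi : {morph qexp psi : A B / A + B}.
Proof. by move=> A B; rewrite /qexp mulmxDr mulmxDl mxE. Qed.

Lemma qexp0 psi : qexp psi 0 = 0.
Proof. by rewrite /qexp mulmx0 mul0mx mxE. Qed.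

Lemma qexpZ psi c A : qexp psi (c *: A) = c * qexp psi A.
Proof. by rewrite /qexp -scalemxAr -scalemxAl mxE. Qed.

Lemma qexp_sum psi I (r : seq I) (P : pred I) (F : I -> 'M[C]_d) :
  qexp psi (\sum_(i <- r | P i) F i) = \sum_(i <- r | P i) qexp psi (F i).
Proof. exact: (big_morph _ (qexpD psi) (qexp0 psi)). Qed.

Lemma qexp1 psi : adjmx psi *m psi = 1%:M -> qexp psi 1%:M = 1.
Proof. by move=> psi1; rewrite /qexp mulmx1 psi1 mxE. Qed.

Lemma qexp_adjmx_mul psi A :
  qexp psi (adjmx A *m A) = (adjmx (A *m psi) *m (A *m psi)) 0 0.
Proof. by rewrite /qexp adjmxM !mulmxA. Qed.

Lemma qexp_adjmx_mul_ge0 psi A : 0 <= qexp psi (adjmx A *m A).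
Proof. by rewrite qexp_adjmx_mul adjmx_mul_ge0. Qed.

(* Expand 0 <= |A psi - z psi|^2 with z = <psi|A|psi> and <psi|psi> = 1. *)
Lemma qexp_cauchy_schwarz psi A : adjmx psi *m psi = 1%:M ->
  `|qexp psi A| ^+ 2 <= qexp psi (adjmx A *m A).
Proof.
move=> psi1; set z := qexp psi A; rewrite sqr_normc.
have eAA : adjmx (A *m psi) *m (A *m psi) = (qexp psi (adjmx A *m A))%:M.
  by rewrite qexp_adjmx_mul -mx11_scalar.
have ez : adjmx psi *m (A *m psi) = z%:M by rewrite /z /qexp mulmxA -mx11_scalar.
have ezJ : adjmx (A *m psi) *m psi = (conjc z)%:M.
  rewrite -[X in _ *m X]adjmxK -adjmxM ez.
  by apply/matrixP => i j; rewrite !ord1 !mxE /= rmorphMn.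
have := adjmx_mul_ge0 (A *m psi - z *: psi).
rewrite adjmxD adjmxN adjmxZ mulmxDl !mulmxDr !mulNmx !mulmxN.
rewrite -!scalemxAl -!scalemxAr psi1 eAA ez ezJ !mxE eqxx /= !mulr1n !mulr1.
by rewrite subrr addr0 subr_ge0.
Qed.

Lemma sqmod_qexp_le psi A : adjmx psi *m psi = 1%:M ->
  sqmod (qexp psi A) <= complex.Re (qexp psi (adjmx A *m A)).
Proof. by move=> psi1; rewrite sqmodE; apply/ler_Re/qexp_cauchy_schwarz. Qed.

End QuadraticForm.

Section Measurement.
Variables (R : realType) (d : nat).
Local Notation C := R[i].
Implicit Types (M : mproc R d) (psi : 'cV[C]_d).

Definition fidelity M psi : R :=
  \sum_(b < mp_m M) \sum_(i < mp_k b) sqmod (qexp psi (mp_A i)).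

Lemma pcondE M psi (b : 'I_(mp_m M)) :
  pcond psi b = \sum_(i < mp_k b) complex.Re (qexp psi (adjmx (mp_A i) *m mp_A i)).
Proof. by rewrite /pcond /povm qexp_sum Re_sum. Qed.

Lemma pcond_ge0 M psi (b : 'I_(mp_m M)) : 0 <= pcond psi b.
Proof. by rewrite pcondE; apply: sumr_ge0 => i _; apply/Re_ge0/qexp_adjmx_mul_ge0. Qed.

Lemma sum_pcond M psi : valid_mproc M -> adjmx psi *m psi = 1%:M ->
  \sum_(b < mp_m M) pcond psi b = 1.
Proof. by move=> vM psi1; rewrite /pcond -Re_sum -qexp_sum vM qexp1. Qed.

Lemma pcond_le1 M psi (b : 'I_(mp_m M)) : valid_mproc M -> adjmx psi *m psi = 1%:M ->
  pcond psi b <= 1.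
Proof.
move=> vM psi1; rewrite -(sum_pcond vM psi1) (bigD1 b) //= lerDl.
by apply: sumr_ge0 => c _; apply: pcond_ge0.
Qed.

Lemma fidelity_ge0 M psi : 0 <= fidelity M psi.
Proof. by apply: sumr_ge0 => b _; apply: sumr_ge0 => i _; apply: sqmod_ge0. Qed.

Lemma fidelity_le1 M psi : valid_mproc M -> adjmx psi *m psi = 1%:M ->
  fidelity M psi <= 1.
Proof.
move=> vM psi1; rewrite -(sum_pcond vM psi1); apply: ler_sum => b _.
by rewrite pcondE; apply: ler_sum => i _; apply: sqmod_qexp_le.
Qed.

End Measurement.

Section Entropy.
Variable R : realType.
Implicit Types x y lam : R.

Lemma xlogxM x y : 0 <= x -> 0 <= y -> xlogx (x * y) = x * y * ln x + x * xlogx y.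
Proof.
rewrite /xlogx le_eqVlt => /predU1P[<-|x0]; first by rewrite !mul0r addr0.
rewrite le_eqVlt => /predU1P[<-|y0]; first by rewrite !(mulr0, mul0r) addr0.
by rewrite lnM ?posrE //; ring.
Qed.

(* -x ln x = x ln (1/x) < x (1/x) = 1 *)
Lemma normr_xlogx_le1 x : 0 <= x <= 1 -> `|xlogx x| <= 1.
Proof.
case/andP; rewrite le_eqVlt => /predU1P[<-|x0] x1; first by rewrite /xlogx mul0r normr0.
rewrite /xlogx ler0_norm; last by rewrite mulr_ge0_le0 ?ln_le0 // ltW.
have := ln_sublinear (x := x^-1); rewrite invr_gt0 lnV ?posrE // => /(_ x0) lt.
rewrite -mulrN; apply: ltW; rewrite -(mulfV (lt0r_neq0 x0)).
by rewrite ltr_pM2l.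
Qed.

Lemma sum_xlogx_mix lam m1 m2 (p : 'I_(m1 + m2) -> R)
    (q1 : 'I_m1 -> R) (q2 : 'I_m2 -> R) :
  0 <= lam <= 1 ->
  (forall b, p (lshift m2 b) = lam * q1 b) ->
  (forall b, p (rshift m1 b) = (1 - lam) * q2 b) ->
  (forall b, 0 <= q1 b) -> (forall b, 0 <= q2 b) ->
  \sum_b q1 b = 1 -> \sum_b q2 b = 1 ->
  \sum_b xlogx (p b) = (xlogx lam + xlogx (1 - lam))
     + lam * \sum_b xlogx (q1 b) + (1 - lam) * \sum_b xlogx (q2 b).
Proof.
case/andP => lam0 lam1 ep1 ep2 q10 q20 sq1 sq2.
have lamC0 : 0 <= 1 - lam by rewrite subr_ge0.
rewrite big_split_ord.
under eq_bigr do rewrite ep1 xlogxM //.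
under [X in _ + X = _]eq_bigr do rewrite ep2 xlogxM //.
by rewrite !big_split /= -!mulr_suml -!mulr_sumr sq1 sq2 /xlogx; ring.
Qed.

End Entropy.

Section Mixture.
Variables (R : realType) (d : nat) (lam : R) (M1 M2 : mproc R d).
Local Notation C := R[i].
Local Notation m1 := (mp_m M1).
Local Notation m2 := (mp_m M2).

Definition mix_k (b : 'I_(m1 + m2)) : nat :=
  match fintype.split b with inl b1 => mp_k b1 | inr b2 => mp_k b2 end.

Definition mix_A (b : 'I_(m1 + m2)) : 'I_(mix_k b) -> 'M[C]_d :=
  match fintype.split b as s
    return 'I_(match s with inl b1 => mp_k b1 | inr b2 => mp_k b2 end) -> 'M[C]_d
  with
  | inl b1 => fun i => real_complex R (Num.sqrt lam) *: mp_A i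
  | inr b2 => fun i => real_complex R (Num.sqrt (1 - lam)) *: mp_A i
  end.

Definition mix : mproc R d := @MProc R d _ mix_k mix_A.

Lemma big_mix_lshift (V : zmodType) (G : 'M[C]_d -> V) (b : 'I_m1) :
  \sum_(i < @mp_k R d mix (lshift m2 b)) G (mp_A i) =
  \sum_(i < mp_k b) G (real_complex R (Num.sqrt lam) *: mp_A i).
Proof.
rewrite /= /mix_k /mix_A; have /= := @unsplitK m1 m2 (inl b).
by move: (lshift m2 b) => x; case: (fintype.split x) => // b1 [->].
Qed.

Lemma big_mix_rshift (V : zmodType) (G : 'M[C]_d -> V) (b : 'I_m2) :
  \sum_(i < @mp_k R d mix (rshift m1 b)) G (mp_A i) =
  \sum_(i < mp_k b) G (real_complex R (Num.sqrt (1 - lam)) *: mp_A i).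
Proof.
rewrite /= /mix_k /mix_A; have /= := @unsplitK m1 m2 (inr b).
by move: (rshift m1 b) => x; case: (fintype.split x) => // b2 [->].
Qed.

Hypothesis lam01 : 0 <= lam <= 1.

Let lam_ge0 : 0 <= lam. Proof. by case/andP: lam01. Qed.
Let lamC_ge0 : 0 <= 1 - lam. Proof. by case/andP: lam01; rewrite subr_ge0. Qed.

Lemma povm_mix_lshift (b : 'I_m1) :
  povm (M := mix) (lshift m2 b) = real_complex R lam *: povm b.
Proof.
rewrite /povm (big_mix_lshift (fun X => adjmx X *m X)) scaler_sumr.
by apply: eq_bigr => i _; rewrite adjmx_mul_scale_sqrt.
Qed.

Lemma povm_mix_rshift (b : 'I_m2) :
  povm (M := mix) (rshift m1 b) = real_complex R (1 - lam) *: povm b.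
Proof.
rewrite /povm (big_mix_rshift (fun X => adjmx X *m X)) scaler_sumr.
by apply: eq_bigr => i _; rewrite adjmx_mul_scale_sqrt.
Qed.

Lemma valid_mix : valid_mproc M1 -> valid_mproc M2 -> valid_mproc mix.
Proof.
rewrite /valid_mproc big_split_ord /= => vM1 vM2.
under eq_bigr do rewrite povm_mix_lshift.
under [X in _ + X]eq_bigr do rewrite povm_mix_rshift.
by rewrite -!scaler_sumr vM1 vM2 -scalerDl -rmorphD subrKC scale1r.
Qed.

Lemma pcond_mix_lshift psi (b : 'I_m1) :
  pcond (M := mix) psi (lshift m2 b) = lam * pcond psi b.
Proof. by rewrite /pcond povm_mix_lshift qexpZ Re_realM. Qed.

Lemma pcond_mix_rshift psi (b : 'I_m2) :
  pcond (M := mix) psi (rshift m1 b) = (1 - lam) * pcond psi b.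
Proof. by rewrite /pcond povm_mix_rshift qexpZ Re_realM. Qed.

Lemma fidelity_mix psi :
  fidelity mix psi = lam * fidelity M1 psi + (1 - lam) * fidelity M2 psi.
Proof.
rewrite /fidelity big_split_ord /= !mulr_sumr; congr (_ + _); apply: eq_bigr => b _.
  rewrite (big_mix_lshift (fun X => sqmod (qexp psi X))) mulr_sumr.
  by apply: eq_bigr => i _; rewrite qexpZ sqmod_realM sqr_sqrtr.
rewrite (big_mix_rshift (fun X => sqmod (qexp psi X))) mulr_sumr.
by apply: eq_bigr => i _; rewrite qexpZ sqmod_realM sqr_sqrtr.
Qed.

Lemma sum_xlogx_pcond_mix psi : valid_mproc M1 -> valid_mproc M2 ->
  adjmx psi *m psi = 1%:M ->
  \sum_(b < mp_m mix) xlogx (pcond psi b) = (xlogx lam + xlogx (1 - lam))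
    + lam * \sum_(b < m1) xlogx (pcond psi b)
    + (1 - lam) * \sum_(b < m2) xlogx (pcond psi b).
Proof.
move=> vM1 vM2 psi1; apply: sum_xlogx_mix => //.
- exact: pcond_mix_lshift.
- exact: pcond_mix_rshift.
- exact: pcond_ge0.
- exact: pcond_ge0.
- exact: sum_pcond.
- exact: sum_pcond.
Qed.

End Mixture.

Section Integration.
Variables (R : realType) (dT : measure_display) (T : measurableType dT)
  (P : probability T R).
Implicit Types (f g : T -> R) (a b c : R).

Let P_setT : P [set: T] = 1%E. Proof. exact: probability_setT. Qed.

Lemma integrable_bounded f c : measurable_fun setT f -> (forall t, `|f t| <= c) ->
  P.-integrable setT (EFin \o f).
Proof.
move=> mf fc; apply: measurable_bounded_integrable => //.
  by move: P_setT => /= ->; rewrite ltry.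
exists c; split; first by rewrite num_real.
by move=> e ce t _; apply: le_trans (fc t) (ltW ce).
Qed.

Lemma integrable_cst c : P.-integrable setT (EFin \o (fun=> c)).
Proof. exact: (@integrable_bounded _ `|c|). Qed.

Lemma integrableR_D f g : P.-integrable setT (EFin \o f) ->
  P.-integrable setT (EFin \o g) -> P.-integrable setT (EFin \o (f \+ g)).
Proof.
move=> fi gi; have -> : EFin \o (f \+ g) = (EFin \o f) \+ (EFin \o g).
  by apply/funext => t /=; rewrite EFinD.
exact: integrableD.
Qed.

Lemma integrableR_Zl a f : P.-integrable setT (EFin \o f) ->
  P.-integrable setT (EFin \o (fun t => a * f t)).
Proof.
move=> fi; have -> : EFin \o (fun t => a * f t) = (fun t => a%:E * (EFin \o f) t)%E.
  by apply/funext => t /=; rewrite EFinM.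
exact: integrableZl.
Qed.

Lemma integrableR_sum I (r : seq I) (f : I -> T -> R) :
  (forall i, P.-integrable setT (EFin \o f i)) ->
  P.-integrable setT (EFin \o (fun t => \sum_(i <- r) f i t)).
Proof.
move=> fi; have -> : EFin \o (fun t => \sum_(i <- r) f i t) =
    (fun t => \sum_(i <- r) (EFin \o f i) t)%E.
  by apply/funext => t /=; rewrite sumEFin.
exact: integrable_sum.
Qed.

Lemma Rintegral_cst_prob c : Rintegral P setT (fun=> c) = c.
Proof. by rewrite Rintegral_cst //; move: P_setT => /= ->; rewrite mulr1. Qed.

Lemma Rintegral_affine a b c f g :
  P.-integrable setT (EFin \o f) -> P.-integrable setT (EFin \o g) ->
  Rintegral P setT (fun t => a + b * f t + c * g t) =
  a + b * Rintegral P setT f + c * Rintegral P setT g.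
Proof.
move=> fi gi; have bfi := integrableR_Zl b fi; have cgi := integrableR_Zl c gi.
rewrite RintegralD //; last exact/integrableR_D/bfi/integrable_cst.
by rewrite RintegralD ?integrable_cst // Rintegral_cst_prob !RintegralZl.
Qed.

Lemma Rintegral_sum I (r : seq I) (f : I -> T -> R) :
  (forall i, P.-integrable setT (EFin \o f i)) ->
  Rintegral P setT (fun t => \sum_(i <- r) f i t) = \sum_(i <- r) Rintegral P setT (f i).
Proof.
move=> fi; elim: r => [|j r IH].
  by under eq_fun do rewrite big_nil; rewrite big_nil Rintegral_cst_prob.
under eq_fun do rewrite big_cons.
by rewrite RintegralD ?integrableR_sum // IH big_cons.
Qed.

End Integration.

Section ComplexMeasurable.
Variables (R : realType) (dT : measure_display) (T : measurableType dT).
Local Notation C := R[i].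

Definition cmeasurable (g : T -> C) : Prop :=
  measurable_fun setT (fun t => complex.Re (g t)) /\
  measurable_fun setT (fun t => complex.Im (g t)).

Lemma cmeasurable_cst (c : C) : cmeasurable (fun=> c).
Proof. by split; apply: measurable_cst. Qed.

Lemma cmeasurableD f g :
  cmeasurable f -> cmeasurable g -> cmeasurable (fun t => f t + g t).
Proof.
move=> [fR fI] [gR gI]; split.
- have -> : (fun t => complex.Re (f t + g t)) =
            (fun t => complex.Re (f t)) \+ (fun t => complex.Re (g t)).
    by apply/funext => t /=; case: (f t); case: (g t).
  exact: measurable_funD.
- have -> : (fun t => complex.Im (f t + g t)) =
            (fun t => complex.Im (f t)) \+ (fun t => complex.Im (g t)).
    by apply/funext => t /=; case: (f t); case: (g t).
  exact: measurable_funD.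
Qed.

Lemma cmeasurableM f g :
  cmeasurable f -> cmeasurable g -> cmeasurable (fun t => f t * g t).
Proof.
move=> [fR fI] [gR gI]; split.
- have -> : (fun t => complex.Re (f t * g t)) =
      (fun t => complex.Re (f t)) \* (fun t => complex.Re (g t)) \-
      (fun t => complex.Im (f t)) \* (fun t => complex.Im (g t)).
    by apply/funext => t /=; case: (f t); case: (g t).
  by apply: measurable_funB; apply: measurable_funM.
- have -> : (fun t => complex.Im (f t * g t)) =
      (fun t => complex.Re (f t)) \* (fun t => complex.Im (g t)) \+
      (fun t => complex.Im (f t)) \* (fun t => complex.Re (g t)).
    by apply/funext => t /=; case: (f t) => ? ?; case: (g t).
  by apply: measurable_funD; apply: measurable_funM.
Qed.

Lemma cmeasurable_conj f : cmeasurable f -> cmeasurable (fun t => conjc (f t)).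
Proof.
move=> [fR fI]; split.
- have -> : (fun t => complex.Re (conjc (f t))) = (fun t => complex.Re (f t)).
    by apply/funext => t; case: (f t).
  exact: fR.
- have -> : (fun t => complex.Im (conjc (f t))) = \- (fun t => complex.Im (f t)).
    by apply/funext => t /=; case: (f t).
  exact: measurable_funN.
Qed.

Lemma cmeasurable_sum I (r : seq I) (f : I -> T -> C) :
  (forall i, cmeasurable (f i)) -> cmeasurable (fun t => \sum_(i <- r) f i t).
Proof.
move=> fm; elim: r => [|j r IH].
  by under eq_fun do rewrite big_nil; apply: cmeasurable_cst.
by under eq_fun do rewrite big_cons; apply: cmeasurableD.
Qed.

End ComplexMeasurable.

Section Ensemble.
Variables (R : realType) (d : nat) (dT : measure_display) (T : measurableType dT)
  (P : probability T R) (psi : T -> 'cV[R[i]]_d).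
Hypothesis psi_unit : forall t, adjmx (psi t) *m psi t = 1%:M.
Hypothesis psi_meas : forall j : 'I_d, cmeasurable (fun t => psi t j 0).
Implicit Types M : mproc R d.

Lemma cmeasurable_qexp (A : 'M[R[i]]_d) : cmeasurable (fun t => qexp (psi t) A).
Proof.
have -> : (fun t => qexp (psi t) A) =
    (fun t => \sum_k (\sum_j conjc (psi t j 0) * A j k) * psi t k 0).
  apply/funext => t; rewrite /qexp !mxE; apply: eq_bigr => k _; rewrite !mxE.
  by congr (_ * _); apply: eq_bigr => j _; rewrite !mxE.
apply: cmeasurable_sum => k; apply: cmeasurableM (psi_meas k).
apply: cmeasurable_sum => j.
apply: cmeasurableM; [exact/cmeasurable_conj/psi_meas | exact: cmeasurable_cst].
Qed.

Lemma measurable_pcond M (b : 'I_(mp_m M)) :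
  measurable_fun setT (fun t => pcond (psi t) b).
Proof. exact: (cmeasurable_qexp (povm b)).1. Qed.

Lemma integrable_pcond M (b : 'I_(mp_m M)) : valid_mproc M ->
  P.-integrable setT (EFin \o (fun t => pcond (psi t) b)).
Proof.
move=> vM; apply: (integrable_bounded P (c := 1) (measurable_pcond b)) => t.
by rewrite ger0_norm ?pcond_ge0 ?pcond_le1.
Qed.

Lemma integrable_sum_xlogx_pcond M : valid_mproc M ->
  P.-integrable setT (EFin \o (fun t => \sum_(b < mp_m M) xlogx (pcond (psi t) b))).
Proof.
move=> vM; apply: integrableR_sum => b.
apply: (integrable_bounded P (c := 1)) => [|t].
  apply: measurable_funM (measurable_pcond b) _.
  exact: measurableT_comp (@measurable_ln R) (measurable_pcond b).
by rewrite normr_xlogx_le1 ?pcond_ge0 ?pcond_le1.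
Qed.

Lemma integrable_fidelity M : valid_mproc M ->
  P.-integrable setT (EFin \o (fun t => fidelity M (psi t))).
Proof.
move=> vM; apply: (integrable_bounded P (c := 1)) => [|t].
  apply: measurable_sum => b; apply: measurable_sum => i.
  have [qR qI] := cmeasurable_qexp (mp_A i).
  by apply: measurable_funD; apply: measurable_funX.
by rewrite ger0_norm ?fidelity_ge0 ?fidelity_le1.
Qed.

Lemma pout_ge0 M (b : 'I_(mp_m M)) : 0 <= pout P psi b.
Proof. by apply: Rintegral_ge0 => t _; apply: pcond_ge0. Qed.

Lemma sum_pout M : valid_mproc M -> \sum_(b < mp_m M) pout P psi b = 1.
Proof.
move=> vM; rewrite /pout -Rintegral_sum => [|b]; last exact: integrable_pcond.
under eq_fun do rewrite (sum_pcond vM (psi_unit _)).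
exact: Rintegral_cst_prob.
Qed.

Lemma avg_disturbanceE M :
  avg_disturbance P psi M = 1 - Rintegral P setT (fun t => fidelity M (psi t)).
Proof. by []. Qed.

Lemma avg_disturbance_ge0 M : valid_mproc M -> 0 <= avg_disturbance P psi M.
Proof.
move=> vM; rewrite avg_disturbanceE subr_ge0 -[leRHS](Rintegral_cst_prob P 1).
apply: le_Rintegral => //; [exact: integrable_fidelity | exact: integrable_cst |].
by move=> t _; apply: fidelity_le1.
Qed.

Section Mixing.
Variables (lam : R) (M1 M2 : mproc R d).
Hypotheses (lam01 : 0 <= lam <= 1) (vM1 : valid_mproc M1) (vM2 : valid_mproc M2).
Local Notation M := (mix lam M1 M2).

Lemma pout_mix_lshift (b : 'I_(mp_m M1)) :
  pout P psi (M := M) (lshift (mp_m M2) b) = lam * pout P psi b.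
Proof.
rewrite /pout; under eq_fun do rewrite pcond_mix_lshift //.
by rewrite RintegralZl //; apply: integrable_pcond.
Qed.

Lemma pout_mix_rshift (b : 'I_(mp_m M2)) :
  pout P psi (M := M) (rshift (mp_m M1) b) = (1 - lam) * pout P psi b.
Proof.
rewrite /pout; under eq_fun do rewrite pcond_mix_rshift //.
by rewrite RintegralZl //; apply: integrable_pcond.
Qed.

Lemma info_gain_mix :
  info_gain P psi M = lam * info_gain P psi M1 + (1 - lam) * info_gain P psi M2.
Proof.
have HB : H_B P psi M = - (xlogx lam + xlogx (1 - lam))
    + lam * H_B P psi M1 + (1 - lam) * H_B P psi M2.
  rewrite /H_B (sum_xlogx_mix (q1 := pout P psi (M := M1))
                              (q2 := pout P psi (M := M2)) lam01).
  - by ring.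
  - exact: pout_mix_lshift.
  - exact: pout_mix_rshift.
  - exact: pout_ge0.
  - exact: pout_ge0.
  - exact: sum_pout.
  - exact: sum_pout.
have HBPsi : H_B_Psi P psi M = - (xlogx lam + xlogx (1 - lam))
    + lam * H_B_Psi P psi M1 + (1 - lam) * H_B_Psi P psi M2.
  rewrite /H_B_Psi; under eq_fun do rewrite sum_xlogx_pcond_mix //.
  by rewrite Rintegral_affine ?integrable_sum_xlogx_pcond //; ring.
by rewrite /info_gain HB HBPsi; ring.
Qed.

Lemma avg_disturbance_mix : avg_disturbance P psi M =
  lam * avg_disturbance P psi M1 + (1 - lam) * avg_disturbance P psi M2.
Proof.
rewrite !avg_disturbanceE; under eq_fun do rewrite fidelity_mix // -(add0r (lam * _)).
by rewrite Rintegral_affine ?integrable_fidelity //; ring.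
Qed.

End Mixing.

End Ensemble.

Section ConvexInf.
Variable R : realType.
Implicit Types A B S : set R.

Lemma le_inf_affine A a b c : A !=set0 -> 0 <= a ->
  (forall x, A x -> c <= a * x + b) -> c <= a * inf A + b.
Proof.
move=> [x0 Ax0]; rewrite le_eqVlt => /predU1P[<-|a0] cA.
  by rewrite mul0r; have := cA x0 Ax0; rewrite mul0r.
rewrite -lerBlDr mulrC -ler_pdivrMr //; apply: lb_le_inf; first by exists x0.
by move=> x Ax; rewrite ler_pdivrMr // lerBlDr mulrC cA.
Qed.

Lemma inf_le_convex S A B lam : has_lbound S -> A !=set0 -> B !=set0 ->
  0 <= lam <= 1 ->
  (forall x y, A x -> B y -> S (lam * x + (1 - lam) * y)) ->
  inf S <= lam * inf A + (1 - lam) * inf B.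
Proof.
move=> lbS neA neB /andP[lam0 lam1] ABS; rewrite addrC.
apply: le_inf_affine => // [|y By]; first by rewrite subr_ge0.
rewrite addrC; apply: le_inf_affine => // x Ax.
exact/ge_inf/ABS.
Qed.

End ConvexInf.

Theorem mainTheorem1 (R : realType) (d : nat) (dT : measure_display)
  (T : measurableType dT) (P : probability T R) (psi : T -> 'cV[R[i]]_d)
  (psi_unit : forall t, adjmx (psi t) *m psi t = 1%:M)
  (psi_meas : forall j : 'I_d,
     measurable_fun setT (fun t => complex.Re (psi t j 0)) /\
     measurable_fun setT (fun t => complex.Im (psi t j 0))) :
  (forall (I1 I2 lam : R), achievable P psi I1 -> achievable P psi I2 ->
     0 <= lam <= 1 -> achievable P psi (lam * I1 + (1 - lam) * I2)) /\
  (forall (I1 I2 lam : R), achievable P psi I1 -> achievable P psi I2 ->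
     0 <= lam <= 1 ->
     frontier P psi (lam * I1 + (1 - lam) * I2)
       <= lam * frontier P psi I1 + (1 - lam) * frontier P psi I2).
Proof.
split => I1 I2 lam [M1 [vM1 <-]] [M2 [vM2 <-]] lam01.
  exists (mix lam M1 M2); split; first exact: valid_mix.
  exact: info_gain_mix.
apply: inf_le_convex => //.
- exists 0 => _ [M [vM _] <-]; exact: avg_disturbance_ge0.
- by exists (avg_disturbance P psi M1), M1.
- by exists (avg_disturbance P psi M2), M2.
- move=> _ _ [N1 [wN1 <-] <-] [N2 [wN2 <-] <-].
  exists (mix lam N1 N2); last exact: avg_disturbance_mix.
  by split; [exact: valid_mix | exact: info_gain_mix].
Qed.
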